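(* There exists a constant $\eta>0$ such that for every line $H_1\in\mathcal H$ and every $R>0$, $$G(H_1):=\int_{\mathcal H^2}\mathbf 1\{c(H_1,H_2,H_3)\in B(0,R)\}\,\Lambda(\mathrm dH_2)\Lambda(\mathrm dH_3)\le \eta R^2.$$
   Context: $\mathcal H$ is the set of lines in $\mathbb{R}^2$, and $\Lambda$ is the translation- and rotation-invariant measure on $\mathcal H$ normalized so that the lines meeting the unit disk have measure $2$; equivalently $\int_{\mathcal H}f(H)\Lambda(\mathrm dH)=\int_{S^1}\int_0^\infty f(H(r,u))\,\mathrm dr\,\sigma(\mathrm du)$, where $H(r,u)$ is the line at distance $r$ from the origin with unit normal $u$, and $\sigma$ is the rotation-invariant measure on $S^1$ with $\sigma(S^1)=2$. For three lines $H_1,H_2,H_3$ in general position, $\Delta(H_1,H_2,H_3)$ denotes the unique triangle formed by them, and $c(H_1,H_2,H_3)$ is the incenter of this triangle (the integrand is defined for $\Lambda^2$-a.e. $(H_2,H_3)$). $B(0,R)$ is the closed disk of radius $R$ centered at the origin. *)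

From Stdlib Require Import Reals Lra.
Open Scope R_scope.

(* ---------- Lines in R^2 ----------
   A line is encoded by a pair (r, t) : R * R and denotes
     H(r, u(t)) = { x in R^2 | <x, u(t)> = r },  u(t) = (cos (PI t), sin (PI t)).
   With r >= 0 and t in [0,2) every line is obtained; the invariant measure
   Lambda of the paper (sigma(S^1) = 2) becomes, in coordinates (r,t) with
   r in [0,oo), t in [0,2), exactly Lebesgue measure dr dt
   (since sigma(du) = d(theta)/PI = dt for theta = PI t). *)
Definition line := (R * R)%type.
Definition ldist (H : line) : R := fst H.
Definition lnx (H : line) : R := cos (PI * snd H).
Definition lny (H : line) : R := sin (PI * snd H).

Definition pt := (R * R)%type.
Definition on_line (H : line) (p : pt) : Prop :=
  lnx H * fst p + lny H * snd p = ldist H.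

Definition ldet (H K : line) : R := lnx H * lny K - lny H * lnx K.

(* intersection point of two non-parallel lines (Cramer's rule) *)
Definition linter (H K : line) : pt :=
  ((ldist H * lny K - ldist K * lny H) / ldet H K,
   (lnx H * ldist K - lnx K * ldist H) / ldet H K).

Definition gen_pos (H1 H2 H3 : line) : Prop :=
  ldet H1 H2 <> 0 /\ ldet H1 H3 <> 0 /\ ldet H2 H3 <> 0 /\
  linter H1 H2 <> linter H1 H3.

Definition pdist (p q : pt) : R :=
  sqrt ((fst p - fst q) ^ 2 + (snd p - snd q) ^ 2).

(* incenter of the triangle Delta(H1,H2,H3): with vertices A,B,C and
   opposite side lengths a,b,c, the incenter is (aA + bB + cC)/(a+b+c). *)
Definition incenter (H1 H2 H3 : line) : pt :=
  let A := linter H2 H3 in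
  let B := linter H1 H3 in
  let C := linter H1 H2 in
  let a := pdist B C in
  let b := pdist A C in
  let c := pdist A B in
  ((a * fst A + b * fst B + c * fst C) / (a + b + c),
   (a * snd A + b * snd B + c * snd C) / (a + b + c)).

Definition in_ball (R0 : R) (p : pt) : Prop := fst p ^ 2 + snd p ^ 2 <= R0 ^ 2.

(* ---------- Lebesgue outer measure in R^d ----------
   Points of R^d are functions nat -> R (only the first d coordinates matter).
   A box is given by lower/upper corners. *)
Definition in_box (d : nat) (lo hi x : nat -> R) : Prop :=
  forall i, (i < d)%nat -> lo i <= x i <= hi i.

Fixpoint box_vol (d : nat) (lo hi : nat -> R) : R :=
  match d with
  | O => 1
  | S k => box_vol k lo hi * (hi k - lo k)
  end.

(* "lambda_d^*(A) <= c": the Lebesgue outer measure of A (infimum of total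
   volumes of countable box covers) is at most c. *)
Definition leb_outer_le (d : nat) (A : (nat -> R) -> Prop) (c : R) : Prop :=
  forall eps, 0 < eps ->
  exists lo hi : nat -> nat -> R,
    (forall n i, (i < d)%nat -> lo n i <= hi n i) /\
    (forall x, A x -> exists n, in_box d (lo n) (hi n) x) /\
    (forall N, sum_f_R0 (fun n => box_vol d (lo n) (hi n)) N <= c + eps).

(* The set of pairs (H2,H3), in coordinates x = (r2,t2,r3,t3) with
   r >= 0, 0 <= t < 2, such that (H1,H2,H3) is in general position and
   c(H1,H2,H3) lies in B(0,R). Its Lambda^2-measure is the integral G(H1). *)
Definition G_set (H1 : line) (R0 : R) (x : nat -> R) : Prop :=
  0 <= x 0%nat /\ 0 <= x 1%nat < 2 /\ 0 <= x 2%nat /\ 0 <= x 3%nat < 2 /\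
  let H2 := (x 0%nat, x 1%nat) in
  let H3 := (x 2%nat, x 3%nat) in
  gen_pos H1 H2 H3 /\ in_ball R0 (incenter H1 H2 H3).

From Stdlib Require Import Reals.
From Stdlib Require Import Lra Lia.
Open Scope R_scope.

(* The incenter I of the triangle cut out by H1, H2, H3 is at
   the same distance (the inradius) from the three lines.  Writing that
   distance through the signed distance <u,I> - r of I to a line H(r,u), and
   using |<u,I>| <= R when I lies in B(0,R), the offsets r2, r3 of H2, H3 are
   forced into the window [a, a + 4R] with a = max(0, |r1| - 2R); the angle
   coordinates lie in [0,2).  Hence the whole set of admissible (H2,H3) sits
   in one box of volume (4R)^2 * 2^2 = 64 R^2, which bounds its outer measure. *)

Definition sdist (H : line) (p : pt) : R := lnx H * fst p + lny H * snd p - ldist H.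

Lemma normal_unit (H : line) : lnx H ^ 2 + lny H ^ 2 = 1.
Proof.
  unfold lnx, lny. pose proof (sin2_cos2 (PI * snd H)) as E. unfold Rsqr in E. lra.
Qed.

Lemma linter_on_both (H K : line) : ldet H K <> 0 ->
  sdist H (linter H K) = 0 /\ sdist K (linter H K) = 0.
Proof. intros D. unfold sdist, linter, ldet in *; simpl. split; field; exact D. Qed.

Definition cross (P Q X : pt) : R :=
  (fst Q - fst P) * (snd X - snd P) - (snd Q - snd P) * (fst X - fst P).

Lemma cross_swap12 (P Q X : pt) : cross Q P X = - cross P Q X.
Proof. unfold cross. ring. Qed.

Lemma cross_rotate (P Q X : pt) : cross Q X P = cross P Q X.
Proof. unfold cross. ring. Qed.

Lemma orthogonal_to_unit (c s dx dy : R) :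
  c ^ 2 + s ^ 2 = 1 -> c * dx + s * dy = 0 ->
  dx = - s * (c * dy - s * dx) /\ dy = c * (c * dy - s * dx).
Proof.
  intros U E. split.
  - transitivity (- s * (c * dy - s * dx) + c * (c * dx + s * dy) + dx * (1 - (c ^ 2 + s ^ 2)));
      [ring | rewrite U, E; ring].
  - transitivity (c * (c * dy - s * dx) + s * (c * dx + s * dy) + dy * (1 - (c ^ 2 + s ^ 2)));
      [ring | rewrite U, E; ring].
Qed.

Lemma base_times_height (H : line) (P Q X : pt) :
  sdist H P = 0 -> sdist H Q = 0 ->
  pdist P Q * Rabs (sdist H X) = Rabs (cross P Q X).
Proof.
  intros HP HQ. pose proof (normal_unit H) as U. unfold sdist, cross, pdist in *.
  set (c := lnx H) in *. set (s := lny H) in *.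
  assert (Height : c * fst X + s * snd X - ldist H
                   = c * (fst X - fst P) + s * (snd X - snd P)) by lra.
  assert (Len : (fst P - fst Q) ^ 2 + (snd P - snd Q) ^ 2
                = (fst Q - fst P) ^ 2 + (snd Q - snd P) ^ 2) by ring.
  assert (Orth : c * (fst Q - fst P) + s * (snd Q - snd P) = 0) by lra.
  rewrite Height, Len. clear HP HQ Height Len.
  set (dx := fst Q - fst P) in *. set (dy := snd Q - snd P) in *.
  destruct (orthogonal_to_unit c s dx dy U Orth) as [Ex Ey].
  set (l := c * dy - s * dx) in Ex, Ey. clearbody c s dx dy l.
  rewrite Ex, Ey.
  replace ((- s * l) ^ 2 + (c * l) ^ 2) with (Rsqr l)
    by (unfold Rsqr; transitivity (l * l * (c ^ 2 + s ^ 2)); [rewrite U|]; ring).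
  rewrite sqrt_Rsqr_abs, <- Rabs_mult, <- Rabs_Ropp. f_equal. ring.
Qed.

Lemma pdist_nonneg (P Q : pt) : 0 <= pdist P Q.
Proof. apply sqrt_pos. Qed.

Lemma pdist_pos (P Q : pt) : P <> Q -> 0 < pdist P Q.
Proof.
  intros NE. destruct (Rle_lt_or_eq_dec _ _ (pdist_nonneg P Q)) as [Pos|Zero]; [exact Pos|].
  exfalso. apply NE. destruct P as [p1 p2], Q as [q1 q2]. unfold pdist in Zero; cbn [fst snd] in Zero.
  rewrite <- !Rsqr_pow2 in Zero. symmetry in Zero.
  apply sqrt_eq_0 in Zero; [|apply Rplus_le_le_0_compat; apply Rle_0_sqr].
  destruct (Rplus_sqr_eq_0 _ _ Zero) as [E1 E2]. f_equal; lra.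
Qed.

Lemma sdist_barycenter (H : line) (A B C : pt) (a b c : R) : a + b + c <> 0 ->
  sdist H ((a * fst A + b * fst B + c * fst C) / (a + b + c),
           (a * snd A + b * snd B + c * snd C) / (a + b + c)) * (a + b + c)
  = a * sdist H A + b * sdist H B + c * sdist H C.
Proof. intros S. unfold sdist; simpl. field. exact S. Qed.

(* The incenter is equidistant from the three lines: each distance times the
   perimeter equals twice the area of the triangle. *)
Lemma incenter_equidistant (H1 H2 H3 : line) : gen_pos H1 H2 H3 ->
  Rabs (sdist H1 (incenter H1 H2 H3)) = Rabs (sdist H2 (incenter H1 H2 H3)) /\
  Rabs (sdist H1 (incenter H1 H2 H3)) = Rabs (sdist H3 (incenter H1 H2 H3)).
Proof.
  intros [D12 [D13 [D23 NE]]].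
  destruct (linter_on_both _ _ D23) as [A2 A3].
  destruct (linter_on_both _ _ D13) as [B1 B3].
  destruct (linter_on_both _ _ D12) as [C1 C2].
  set (A := linter H2 H3) in *. set (B := linter H1 H3) in *. set (C := linter H1 H2) in *.
  assert (Ha : 0 < pdist B C) by (apply pdist_pos; intro E; apply NE; fold B C; now rewrite E).
  pose proof (pdist_nonneg A C) as Hb. pose proof (pdist_nonneg A B) as Hc.
  set (a := pdist B C) in *. set (b := pdist A C) in *. set (c := pdist A B) in *.
  assert (Per : 0 < a + b + c) by lra.
  set (I := incenter H1 H2 H3).
  assert (Area : forall (H : line) (w : R) (V : pt), 0 <= w ->
            sdist H I * (a + b + c) = w * sdist H V ->
            w * Rabs (sdist H V) = Rabs (cross B C A) ->
            Rabs (sdist H I) * (a + b + c) = Rabs (cross B C A)).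
  { intros H w V Hw E K. rewrite <- (Rabs_pos_eq (a + b + c)) by lra.
    rewrite <- Rabs_mult, E, Rabs_mult, (Rabs_pos_eq w) by exact Hw. exact K. }
  assert (Bary : forall H, sdist H I * (a + b + c)
                   = a * sdist H A + b * sdist H B + c * sdist H C)
    by (intro H; apply sdist_barycenter; lra).
  assert (E1 : Rabs (sdist H1 I) * (a + b + c) = Rabs (cross B C A)).
  { apply (Area H1 a A); [lra| rewrite Bary, B1, C1; ring |].
    exact (base_times_height H1 B C A B1 C1). }
  assert (E2 : Rabs (sdist H2 I) * (a + b + c) = Rabs (cross B C A)).
  { apply (Area H2 b B); [lra| rewrite Bary, A2, C2; ring |].
    rewrite <- (cross_rotate B C A), <- (Rabs_Ropp (cross C A B)), <- cross_swap12.
    exact (base_times_height H2 A C B A2 C2). }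
  assert (E3 : Rabs (sdist H3 I) * (a + b + c) = Rabs (cross B C A)).
  { apply (Area H3 c C); [lra| rewrite Bary, A3, B3; ring |].
    rewrite (cross_rotate A B C). exact (base_times_height H3 A B C A3 B3). }
  split; apply (Rmult_eq_reg_r (a + b + c)); lra.
Qed.

(* Cauchy-Schwarz: the projection of a point of B(0,R) on a unit normal is in [-R,R]. *)
Lemma projection_in_ball (H : line) (I : pt) (R0 : R) : 0 < R0 -> in_ball R0 I ->
  - R0 <= lnx H * fst I + lny H * snd I <= R0.
Proof.
  intros Rp B. unfold in_ball in B. pose proof (normal_unit H) as U.
  assert (Lagrange : (lnx H * fst I + lny H * snd I) ^ 2
                     + (lnx H * snd I - lny H * fst I) ^ 2
                     = (lnx H ^ 2 + lny H ^ 2) * (fst I ^ 2 + snd I ^ 2)) by ring.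
  rewrite U in Lagrange.
  pose proof (pow2_ge_0 (lnx H * snd I - lny H * fst I)).
  split; nra.
Qed.

Definition window_start (r1 R0 : R) : R := Rmax 0 (Rabs r1 - 2 * R0).

Lemma offset_window (r1 p q r2 R0 : R) :
  -R0 <= p <= R0 -> -R0 <= q <= R0 -> 0 <= r2 ->
  Rabs (p - r1) = Rabs (q - r2) ->
  window_start r1 R0 <= r2 <= window_start r1 R0 + 4 * R0.
Proof.
  intros Hp Hq Hr E. revert E. unfold window_start, Rmax, Rabs.
  repeat case Rcase_abs; repeat case Rle_dec; intros; lra.
Qed.

(* A set contained in a single box has outer measure at most the box volume
   (cover it by that box and degenerate ones of volume zero). *)
Lemma box_vol_degenerate (d : nat) (lo : nat -> R) : (0 < d)%nat -> box_vol d lo lo = 0.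
Proof. intros Hd. destruct d as [|k]; [lia|]. simpl. ring. Qed.

Lemma leb_outer_le_box (d : nat) (A : (nat -> R) -> Prop) (lo hi : nat -> R) :
  (0 < d)%nat -> (forall i, (i < d)%nat -> lo i <= hi i) ->
  (forall x, A x -> in_box d lo hi x) ->
  leb_outer_le d A (box_vol d lo hi).
Proof.
  intros Hd Hle Sub eps Heps.
  exists (fun n => match n with O => lo | _ => fun _ => 0 end).
  exists (fun n => match n with O => hi | _ => fun _ => 0 end).
  split; [|split].
  - intros [|n] i Hi; [exact (Hle i Hi) | lra].
  - intros x Ax. exists O. exact (Sub x Ax).
  - intros N. induction N as [|N IH]; simpl; [lra|].
    rewrite box_vol_degenerate by exact Hd. lra.
Qed.

Definition win_lo (a : R) (i : nat) : R :=
  match i with 0%nat | 2%nat => a | _ => 0 end.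
Definition win_hi (a R0 : R) (i : nat) : R :=
  match i with 0%nat | 2%nat => a + 4 * R0 | _ => 2 end.

Lemma window_box_vol (a R0 : R) : box_vol 4 (win_lo a) (win_hi a R0) = 64 * R0 ^ 2.
Proof. simpl. ring. Qed.

Lemma G_set_in_window (H1 : line) (R0 : R) (x : nat -> R) : 0 < R0 ->
  G_set H1 R0 x ->
  in_box 4 (win_lo (window_start (ldist H1) R0)) (win_hi (window_start (ldist H1) R0) R0) x.
Proof.
  intros Rp [x0 [x1 [x2 [x3 [GP IB]]]]].
  destruct (incenter_equidistant _ _ _ GP) as [E2 E3].
  set (I := incenter H1 (x 0%nat, x 1%nat) (x 2%nat, x 3%nat)) in *.
  pose proof (projection_in_ball H1 I R0 Rp IB) as P1.
  pose proof (projection_in_ball (x 0%nat, x 1%nat) I R0 Rp IB) as P2.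
  pose proof (projection_in_ball (x 2%nat, x 3%nat) I R0 Rp IB) as P3.
  unfold sdist in E2, E3. unfold ldist in E2 at 2, E3 at 2. simpl in E2, E3.
  pose proof (offset_window _ _ _ _ _ P1 P2 x0 E2) as W2.
  pose proof (offset_window _ _ _ _ _ P1 P3 x2 E3) as W3.
  intros i Hi. destruct i as [|[|[|[|i]]]]; simpl; lra || lia.
Qed.

Theorem lemma3p2 :
  exists eta : R, 0 < eta /\
    forall (H1 : line) (R0 : R), 0 < R0 ->
      leb_outer_le 4 (G_set H1 R0) (eta * R0 ^ 2).
Proof.
  exists 64. split; [lra|].
  intros H1 R0 Rp.
  set (a := window_start (ldist H1) R0).
  rewrite <- (window_box_vol a R0).
  apply leb_outer_le_box; [lia| |].
  - assert (0 <= a) by apply Rmax_l.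
    intros i Hi. destruct i as [|[|[|[|i]]]]; simpl; lra || lia.
  - intros x Gx. exact (G_set_in_window H1 R0 x Rp Gx).
Qed.
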